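(* Let $f:\mathbb{R}^d\to\mathbb{R}$ and $\phi:\mathbb{R}\to\mathbb{R}$ be twice differentiable and let $L\coloneqq\phi\circ f$. Let $\alpha_\phi(x)$ be a Newton stepsize schedule for $L$. Define, wherever the expression is defined, \[ \alpha(x)\coloneqq\alpha_\phi(x)\left(1+\frac{\phi''(f(x))}{\phi'(f(x))}\,\|\nabla f(x)\|_x^{*2}\right)^{-1}. \] Assume $\nabla f(x)\in\mathrm{Range}(\nabla^2 f(x))$ at every point $x$ where a step is taken. Then the Newton method on $f$ with stepsize schedule $\alpha(x)$ produces the identical sequence of iterates to the Newton method on $L$ with stepsize schedule $\alpha_\phi(x)$.
   Context: $\mathbf{B}^\dagger$ denotes the Moore–Penrose pseudoinverse. $\|g\|_x^{*2}\coloneqq\langle g,[\nabla^2 f(x)]^{\dagger}g\rangle$. The Newton method with stepsize schedule $\beta(\cdot)$ on a function $F$ is the iteration $x^{k+1}=x^k-\beta(x^k)[\nabla^2F(x^k)]^{\dagger}\nabla F(x^k)$, started from the same initial point for both methods. *)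

From HB Require Import structures.
From mathcomp Require Import all_boot all_order all_algebra.
From mathcomp Require Import all_classical all_reals all_analysis.
Set Implicit Arguments. Unset Strict Implicit. Unset Printing Implicit Defensive.
Import Order.TTheory GRing.Theory Num.Theory.
Import numFieldNormedType.Exports.
Local Open Scope classical_set_scope.
Local Open Scope ring_scope.

Section Defs.
Variables (R : realType) (d : nat).

Definition evec (i : 'I_d) : 'cV[R]_d := delta_mx i ord0.

Definition grad (F : 'cV[R]_d -> R) (x : 'cV[R]_d) : 'cV[R]_d :=
  \col_i ('D_(evec i) F x).

Definition hess (F : 'cV[R]_d -> R) (x : 'cV[R]_d) : 'M[R]_d :=
  \matrix_(i, j) ('D_(evec j) (fun y => 'D_(evec i) F y) x).

Definition penrose (A B : 'M[R]_d) : Prop :=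
  [/\ A *m B *m A = A, B *m A *m B = B, (A *m B)^T = A *m B & (B *m A)^T = B *m A].

(* Moore--Penrose pseudoinverse (the unique matrix satisfying the Penrose
   conditions; it exists for every real matrix) *)
Definition pinv (A : 'M[R]_d) : 'M[R]_d := xget 0 [set B | penrose A B].

Definition dnorm2 (f : 'cV[R]_d -> R) (x g : 'cV[R]_d) : R :=
  (g^T *m pinv (hess f x) *m g) ord0 ord0.

Fixpoint newton (F : 'cV[R]_d -> R) (beta : 'cV[R]_d -> R) (x0 : 'cV[R]_d)
  (k : nat) : 'cV[R]_d :=
  match k with
  | 0 => x0
  | k'.+1 => let x := newton F beta x0 k' in
             x - beta x *: (pinv (hess F x) *m grad F x)
  end.

Definition alpha_sched (f : 'cV[R]_d -> R) (phi : R -> R)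
  (alpha_phi : 'cV[R]_d -> R) (x : 'cV[R]_d) : R :=
  alpha_phi x *
  (1 + (derive1 (derive1 phi)) (f x) / (derive1 phi) (f x) * dnorm2 f x (grad f x))^-1.

End Defs.

From Pilot Require Import Defs.
From HB Require Import structures.
From mathcomp Require Import all_boot all_order all_algebra.
From mathcomp Require Import all_classical all_reals all_analysis.
From mathcomp Require Import ring lra.
Import Order.TTheory GRing.Theory Num.Theory.
Import numFieldNormedType.Exports.
Set Implicit Arguments. Unset Strict Implicit. Unset Printing Implicit Defensive.
Local Open Scope ring_scope.

(* The gradient of L = phi o f is c g and its Hessian is the rank-one update
   A = c H + e g g^T of the Hessian H of f, where g = grad f x, c = phi'(f x),
   e = phi''(f x), and H is symmetric by Schwarz's theorem.  When g = H v, the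
   vector y = (c + e s)^-1 H^+ g, with s = <g, H^+ g>, solves A y = g and lies
   in the range of the symmetric matrix A; the Penrose conditions force A^+ g to
   be any such y.  So the L-Newton step with stepsize alpha_phi is the f-Newton
   step scaled by c / (c + e s) = (1 + (e / c) s)^-1, i.e. with stepsize alpha. *)

Section Gram.
Variable R : realFieldType.

Lemma row_mulmx_tr_eq0 n (w : 'rV[R]_n) : w *m w^T = 0 -> w = 0.
Proof.
move=> /(congr1 (fun M : 'M[R]_1 => M ord0 ord0)); rewrite !mxE => w2_eq0.
apply/rowP => j; rewrite mxE; apply/eqP; rewrite -sqrf_eq0 expr2; apply/eqP.
have sq_ge0 k : predT k -> 0 <= w ord0 k * w^T k ord0.
  by move=> _; rewrite mxE -expr2 sqr_ge0.
by have := @psumr_eq0P _ _ predT _ sq_ge0 w2_eq0 j isT; rewrite mxE.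
Qed.

Lemma row_free_mulmx_tr_unit r n (G : 'M[R]_(r, n)) :
  row_free G -> G *m G^T \in unitmx.
Proof.
move=> freeG; rewrite -row_free_unit; apply: inj_row_free => v vGG0.
apply: (row_free_inj freeG); rewrite mul0mx; apply: row_mulmx_tr_eq0.
by rewrite trmx_mul mulmxA -(mulmxA v) vGG0 mul0mx.
Qed.

End Gram.

Section MoorePenrose.
Variables (R : realType) (d : nat).
Implicit Types (A B H HB : 'M[R]_d) (g y z : 'cV[R]_d).

Lemma penrose_full_rank_factor r (F : 'M[R]_(d, r)) (G : 'M[R]_(r, d)) :
  row_free G -> row_free F^T -> exists B, penrose (F *m G) B.
Proof.
move=> freeG freeFT.
have unitG := row_free_mulmx_tr_unit freeG.
have unitF : F^T *m F \in unitmx by rewrite -[X in _ *m X]trmxK row_free_mulmx_tr_unit.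
set P := invmx (G *m G^T); set Q := invmx (F^T *m F).
have PT : P^T = P by rewrite /P trmx_inv trmx_mul trmxK.
have QT : Q^T = Q by rewrite /Q trmx_inv trmx_mul trmxK.
have eAB : (F *m G) *m (G^T *m P *m Q *m F^T) = F *m Q *m F^T.
  by rewrite !mulmxA -(mulmxA F G) -(mulmxA F) mulmxV // mulmx1.
have eBA : (G^T *m P *m Q *m F^T) *m (F *m G) = G^T *m P *m G.
  by rewrite !mulmxA -(mulmxA _ F^T F) -(mulmxA _ Q) /Q mulVmx // mulmx1.
exists (G^T *m P *m Q *m F^T); split.
- by rewrite eAB !mulmxA -(mulmxA _ F^T F) -(mulmxA F Q) /Q mulVmx // mulmx1.
- by rewrite eBA -!mulmxA (mulmxA G) (mulmxA P) /P mulVmx // mul1mx.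
- by rewrite eAB !trmx_mul trmxK QT mulmxA.
- by rewrite eBA !trmx_mul trmxK PT mulmxA.
Qed.

(* Unqualified [pinv] is the classical library's inverse of a function on a set. *)
Lemma penrose_pinv A : penrose A (Defs.pinv A).
Proof.
suff : exists B, penrose A B by move/(xgetPex 0).
have freeCT : row_free (col_base A)^T.
  by rewrite /row_free mxrank_tr; exact: col_base_full.
by have := penrose_full_rank_factor (row_base_free A) freeCT; rewrite mulmx_base.
Qed.

Lemma penrose_solve A B g y z :
  penrose A B -> A *m y = g -> y = A^T *m z -> B *m g = y.
Proof.
case=> ABA _ _ BA_sym <- ->.
by rewrite !mulmxA -BA_sym -trmx_mul mulmxA ABA.
Qed.

Lemma mulmx_mx11 n (g : 'cV[R]_n) (M : 'M[R]_1) : g *m M = M ord0 ord0 *: g.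
Proof. by rewrite {1}[M]mx11_scalar mul_mx_scalar. Qed.

Lemma penrose_rank_one_update H HB B g v (c e : R) :
  H^T = H -> penrose H HB -> g = H *m v -> c != 0 ->
  let s := (g^T *m HB *m g) ord0 ord0 in c + e * s != 0 ->
  penrose (c *: H + e *: (g *m g^T)) B ->
  B *m g = (c + e * s)^-1 *: (HB *m g).
Proof.
move=> H_sym [HHBH HBHHB _ HBH_sym] g_def c_neq0 s cs_neq0.
set A := c *: H + e *: (g *m g^T) => penroseA.
have HHBg : H *m (HB *m g) = g by rewrite g_def !mulmxA HHBH.
set y := (c + e * s)^-1 *: (HB *m g).
have Ay : A *m y = g.
  have ggT : g *m g^T *m (HB *m g) = s *: g by rewrite -mulmxA mulmx_mx11 mulmxA.
  rewrite /y -scalemxAr mulmxDl -!scalemxAl HHBg ggT scalerA -scalerDl.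
  by rewrite scalerA mulVf // scale1r.
have A_sym : A^T = A by rewrite linearD /= !linearZ /= H_sym trmx_mul trmxK.
(* [y] lies in the range of [A^T] = [A]: solve for [HB g] in
   [A (HB^T HB g) = c HB g + e q g] and use [g = A y]. *)
set q := ((HB *m g)^T *m (HB *m g)) ord0 ord0.
set a := (c * (c + e * s))^-1.
apply: (penrose_solve penroseA Ay (z := a *: (HB^T *m HB *m g) - (a * e * q) *: y)).
have HHBT : H *m HB^T = HB *m H by rewrite -HBH_sym trmx_mul H_sym.
have A_HBTHBg : A *m (HB^T *m HB *m g) = c *: (HB *m g) + (e * q) *: g.
  rewrite mulmxDl -!scalemxAl !mulmxA HHBT HBHHB -scalerA; congr (_ + _ *: _).
  by rewrite -!mulmxA mulmx_mx11 /q trmx_mul !mulmxA.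
rewrite A_sym mulmxBr -!scalemxAr A_HBTHBg scalemxAr Ay scalerDr !scalerA -addrA.
rewrite [X in _ + X](_ : _ = 0) ?addr0; last by rewrite mulrA subrr.
by rewrite /y /a; congr (_ *: _); rewrite invfM mulrAC mulVf // mul1r.
Qed.

End MoorePenrose.

Section ChainRule.
Variables (R : realType) (d : nat).
Local Notation V := 'cV[R]_d.
Implicit Types (f : V -> R) (p : R -> R) (x y v : V).

Lemma partialE f (i : 'I_d) x : 'D_(evec R i) f x = grad f x i ord0.
Proof. by rewrite mxE. Qed.

Lemma differentiable_partial f (i : 'I_d) x :
  differentiable (grad f) x -> differentiable (fun y => 'D_(evec R i) f y) x.
Proof.
move=> dgrad; under eq_fun do rewrite partialE.
exact: (differentiable_comp dgrad (differentiable_coord _ i ord0)).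
Qed.

Lemma derive_comp_scalar f p x v :
  differentiable f x -> derivable p (f x) 1 ->
  'D_v (p \o f) x = derive1 p (f x) * 'D_v f x.
Proof.
move=> df dp1; have dp : differentiable p (f x) by apply/derivable1_diffP.
have dpf : differentiable (p \o f) x by apply: differentiable_comp.
by rewrite deriveE // diff_comp // /= deriv1E // deriveE // mulrC.
Qed.

Lemma derivable_comp_scalar f p x v :
  differentiable f x -> derivable p (f x) 1 -> derivable (p \o f) x v.
Proof.
move=> df /derivable1_diffP dp.
by apply: diff_derivable; apply: differentiable_comp.
Qed.

Lemma grad_comp f p x :
  differentiable f x -> derivable p (f x) 1 ->
  grad (p \o f) x = derive1 p (f x) *: grad f x.
Proof. by move=> df dp; apply/matrixP => i j; rewrite !mxE derive_comp_scalar. Qed.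

Lemma hess_comp f p x :
  (forall y, differentiable f y) -> differentiable (grad f) x ->
  (forall t, derivable p t 1) -> (forall t, derivable (derive1 p) t 1) ->
  hess (p \o f) x = derive1 p (f x) *: hess f x
     + derive1 (derive1 p) (f x) *: (grad f x *m (grad f x)^T).
Proof.
move=> df dgrad dp dp2; apply/matrixP => i j; rewrite !mxE.
have -> : (fun y => 'D_(evec R i) (p \o f) y)
    = (derive1 p \o f) * (fun y => 'D_(evec R i) f y).
  by apply: funext => y; rewrite derive_comp_scalar.
rewrite deriveM; last 2 first.
- exact: derivable_comp_scalar.
- exact/diff_derivable/differentiable_partial.
rewrite derive_comp_scalar // big_ord1 !mxE /= /GRing.scale /=.
by rewrite mulrCA.
Qed.

End ChainRule.

Section Schwarz.
Variables (R : realType) (d : nat).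
Local Notation V := 'cV[R]_d.

Lemma mx_norm_entry m n (M : 'M[R]_(m, n)) i j : `|M i j| <= `|M|.
Proof.
rewrite [leRHS]/Num.Def.normr /= mx_normrE.
by apply: le_trans; last exact: (le_bigmax _ _ (i, j)).
Qed.

Lemma norm_evec (i : 'I_d) : `|evec R i| <= 1.
Proof.
rewrite [leLHS]/Num.Def.normr /= mx_normrE; apply: bigmax_le => //= -[a b] _.
by rewrite mxE; case: (_ && _); rewrite ?normr1 ?normr0 ?ler01.
Qed.

Lemma difference_quotient_line (f : V -> R) (y v : V) (s : R) :
  (fun h : R => h^-1 *: (((fun t : R => f (y + t *: v)) \o shift s) (h *: 1)
                         - f (y + s *: v)))
  = (fun h : R => h^-1 *: ((f \o shift (y + s *: v)) (h *: v) - f (y + s *: v))).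
Proof.
apply: funext => h /=; congr (_ *: (f _ - _)).
by rewrite [_%:A]mulr1 scalerDl addrCA.
Qed.

Lemma derive_line (f : V -> R) (y v : V) (s : R) :
  'D_1 (fun t : R => f (y + t *: v)) s = 'D_v f (y + s *: v).
Proof. by rewrite /derive difference_quotient_line. Qed.

Lemma derivable_line (f : V -> R) (y v : V) (s : R) :
  derivable f (y + s *: v) v -> derivable (fun t : R => f (y + t *: v)) s 1.
Proof. by rewrite /derivable difference_quotient_line. Qed.

Variables (f : V -> R) (x : V).
Hypotheses (df : forall y, differentiable f y) (dgrad : differentiable (grad f) x).

Lemma hessE (i j : 'I_d) : hess f x i j = ('d (grad f) x (evec R j)) i ord0.
Proof.
rewrite mxE; under eq_fun do rewrite partialE.
by rewrite -deriveE // derive_mx ?mxE //; exact: diff_derivable.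
Qed.

Definition second_diff (i j : 'I_d) (t : R) :=
  f (x + t *: evec R j + t *: evec R i) - f (x + t *: evec R i)
  - f (x + t *: evec R j) + f x.

Lemma second_diff_sym i j t : second_diff i j t = second_diff j i t.
Proof. rewrite /second_diff (addrAC x (t *: evec R j)); ring. Qed.

Lemma second_diff_mvt i j t : 0 < t -> exists2 c, c \in `]0, t[ &
  second_diff i j t = (grad f (x + t *: evec R j + c *: evec R i) i ord0
                       - grad f (x + c *: evec R i) i ord0) * t.
Proof.
move=> t_gt0.
pose slice s := f (x + t *: evec R j + s *: evec R i) - f (x + s *: evec R i).
have slice_derivable s : derivable slice s 1.
  by apply: derivableB; apply: derivable_line; exact: diff_derivable.
have slice_D s : 'D_1 slice s = grad f (x + t *: evec R j + s *: evec R i) i ord0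
                               - grad f (x + s *: evec R i) i ord0.
  rewrite deriveB; try by apply: derivable_line; exact: diff_derivable.
  by rewrite !derive_line !partialE.
have [|| c c_in mvt] := @MVT R slice ('D_1 slice) 0 t t_gt0.
- by move=> s _; apply: derivableP.
- apply: continuous_subspaceT => s.
  exact/differentiable_continuous/derivable1_diffP.
exists c => //; move: mvt; rewrite subr0 -slice_D => <-.
by rewrite /slice /second_diff !scale0r !addr0; ring.
Qed.

Definition taylor_rem (h : V) : V := grad f (h + x) - grad f x - 'd (grad f) x h.

Lemma taylor_rem_small (e : R) : 0 < e -> exists2 del : R, 0 < del &
  forall h, `|h| < del -> `|taylor_rem h| <= e * `|h|.
Proof.
move=> e_gt0; move: (diff_locally dgrad); set k := (X in _ = _ + X) => expand.
have /eqoP/(_ e e_gt0)/nbhs_norm0P[del del_gt0 small] := littleo_eqo k.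
exists del => // h /small; congr (_ <= _); rewrite /taylor_rem.
have -> : grad f (h + x) = grad f x + 'd (grad f) x h + k h.
  by have := congr1 (fun F => F h) expand.
by rewrite -addrA -opprD [_ + k h]addrC addrK.
Qed.

Lemma second_diff_taylor i j t : 0 < t -> exists2 c, c \in `]0, t[ &
  second_diff i j t - t ^+ 2 * ('d (grad f) x (evec R j)) i ord0
  = t * (taylor_rem (t *: evec R j + c *: evec R i) i ord0
         - taylor_rem (c *: evec R i) i ord0).
Proof.
move=> t_gt0; have [c c_in ->] := second_diff_mvt i j t_gt0; exists c => //.
have -> : x + t *: evec R j + c *: evec R i = (t *: evec R j + c *: evec R i) + x.
  by rewrite -addrA addrC.
have dZ : 'd (grad f) x (t *: evec R j) = t *: 'd (grad f) x (evec R j).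
  exact: linearZ.
by rewrite [x + _]addrC /taylor_rem linearD /= dZ !mxE; ring.
Qed.

Lemma norm_scale_evec_le (c : R) (i : 'I_d) : 0 <= c -> `|c *: evec R i| <= c.
Proof. by move=> c_ge0; rewrite normrZ ger0_norm // ler_piMr // norm_evec. Qed.

Lemma second_diff_approx i j (e del t : R) : 0 < e ->
  (forall h, `|h| < del -> `|taylor_rem h| <= e * `|h|) -> 0 < t -> 2 * t < del ->
  `|second_diff i j t - t ^+ 2 * ('d (grad f) x (evec R j)) i ord0| <= 3 * e * t ^+ 2.
Proof.
move=> e_gt0 small t_gt0 t_lt.
have [c] := second_diff_taylor i j t_gt0; rewrite in_itv /= => /andP[c_gt0 c_lt] ->.
set h1 := t *: evec R j + c *: evec R i; set h2 := c *: evec R i.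
have norm_h1 : `|h1| <= t + c.
  by apply: (le_trans (ler_normD _ _)); apply: lerD; apply: norm_scale_evec_le; lra.
have norm_h2 : `|h2| <= c by apply: norm_scale_evec_le; lra.
have rem_bound h : `|h| < del -> `|taylor_rem h i ord0| <= e * `|h|.
  by move=> /small; apply: le_trans; exact: mx_norm_entry.
have rem1 : `|taylor_rem h1 i ord0| <= e * `|h1|.
  by apply: rem_bound; apply: (le_lt_trans norm_h1); lra.
have rem2 : `|taylor_rem h2 i ord0| <= e * `|h2|.
  by apply: rem_bound; apply: (le_lt_trans norm_h2); lra.
have e_h1 := ler_wpM2l (ltW e_gt0) norm_h1.
have e_h2 := ler_wpM2l (ltW e_gt0) norm_h2.
have e_c := ler_wpM2l (ltW e_gt0) (ltW c_lt).
have rem_diff : `|taylor_rem h1 i ord0 - taylor_rem h2 i ord0| <= 3 * e * t.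
  by apply: (le_trans (ler_normB _ _)); lra.
rewrite normrM gtr0_norm // expr2.
by have := ler_wpM2l (ltW t_gt0) rem_diff; lra.
Qed.

(* By the mean value theorem both [second_diff i j t] and [second_diff j i t]
   are t^2 times the respective mixed partial up to o(t^2), and they coincide. *)
Lemma diff_grad_entry_le i j (e : R) : 0 < e ->
  ('d (grad f) x (evec R j)) i ord0 <= ('d (grad f) x (evec R i)) j ord0 + e.
Proof.
move=> e_gt0; have e6_gt0 : 0 < e / 6 by lra.
have [del del_gt0 small] := taylor_rem_small e6_gt0.
set t := del / 4; have t_gt0 : 0 < t by rewrite /t; lra.
have t_lt : 2 * t < del by rewrite /t; lra.
have := second_diff_approx i j e6_gt0 small t_gt0 t_lt.
have := second_diff_approx j i e6_gt0 small t_gt0 t_lt.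
rewrite second_diff_sym !ler_norml => /andP[_ approx_ji] /andP[approx_ij _].
have tt_gt0 : 0 < t ^+ 2 by rewrite exprn_gt0.
rewrite -(ler_pM2l tt_gt0); lra.
Qed.

Lemma hess_sym i j : hess f x i j = hess f x j i.
Proof.
rewrite !hessE; apply/le_anti/andP; split; apply/ler_addgt0Pr => e e_gt0;
  exact: diff_grad_entry_le.
Qed.

End Schwarz.

Theorem corollary1 (R : realType) (d : nat) (f : 'cV[R]_d -> R) (phi : R -> R)
  (alpha_phi : 'cV[R]_d -> R) (x0 : 'cV[R]_d)
  (* f twice differentiable *)
  (hf1 : forall x, differentiable f x)
  (hf2 : forall x, differentiable (grad f) x)
  (* phi twice differentiable *)
  (hphi1 : forall t, derivable phi t 1)
  (hphi2 : forall t, derivable (derive1 phi) t 1)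
  (* at every iterate: alpha(x) is defined and grad f x lies in Range(hess f x) *)
  (hdef : forall k, let x := newton f (alpha_sched f phi alpha_phi) x0 k in
     [/\ derive1 phi (f x) != 0,
         1 + derive1 (derive1 phi) (f x) / derive1 phi (f x)
               * dnorm2 f x (grad f x) != 0
       & exists v : 'cV[R]_d, grad f x = hess f x *m v]) :
  forall k, newton f (alpha_sched f phi alpha_phi) x0 k
            = newton (phi \o f) alpha_phi x0 k.
Proof.
elim=> [//|k IH] /=; rewrite -IH.
have [c_neq0 denom_neq0 [v grad_range]] := hdef k.
set x := newton f _ x0 k in c_neq0 denom_neq0 grad_range *.
set c := derive1 phi (f x) in c_neq0 denom_neq0 *.
set e := derive1 (derive1 phi) (f x) in denom_neq0 *.
set s := dnorm2 f x (grad f x) in denom_neq0 *.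
have H_sym : (hess f x)^T = hess f x.
  by apply/matrixP => i j; rewrite mxE hess_sym.
have cs_neq0 : c + e * s != 0.
  by rewrite (_ : c + e * s = c * (1 + e / c * s)) ?mulf_neq0 //; field.
rewrite grad_comp // hess_comp // -/c -/e -scalemxAr.
rewrite (penrose_rank_one_update H_sym (penrose_pinv _) grad_range c_neq0 cs_neq0
           (penrose_pinv _)) -/(dnorm2 f x (grad f x)) -/s.
congr (_ - _); rewrite !scalerA /alpha_sched -/c -/e -/s; congr (_ *: _).
by field; rewrite c_neq0 cs_neq0.
Qed.
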